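(* Let $m,n\ge1$, $\mathcal{H}=\mathbb{R}^{m\times n}$ with $\langle\mathbf{A},\mathbf{B}\rangle_{\mathcal{H}}=\mathbf{A}^\intercal\mathbf{B}$, and let $\mathbf{V}\in\mathbb{R}^{n\times n}$ be a nonzero symmetric matrix such that $\langle\langle\mathbf{X},\mathbf{X}\rangle_{\mathcal{H}},\mathbf{V}/\|\mathbf{V}\|\rangle\ge0$ for all $\mathbf{X}\in\mathcal{H}$. Let $\mathcal{S}=\{\mathbf{X}_1,\dots,\mathbf{X}_N\}$ be a finite set of matrices in $\mathbb{R}^{m\times n}$ and define $$\mathcal{H}_{\max}\circ\mathcal{S}=\Big\{\Big(\big\langle\langle\mathbf{W},\mathbf{X}_1\rangle_{\mathcal{H}},\tfrac{\mathbf{V}}{\|\mathbf{V}\|}\big\rangle,\dots,\big\langle\langle\mathbf{W},\mathbf{X}_N\rangle_{\mathcal{H}},\tfrac{\mathbf{V}}{\|\mathbf{V}\|}\big\rangle\Big):\ \|\mathbf{W}\|_{\max}\le1\Big\}\subseteq\mathbb{R}^N.$$ Then $$R(\mathcal{H}_{\max}\circ\mathcal{S})\le n\max_{1\le i\le N}\|\mathbf{X}_i\|_1\sqrt{\frac{2(m\ln2+\ln n)}{N}}.$$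
   Context: $\langle\cdot,\cdot\rangle$ is the Frobenius inner product and $\|\mathbf{V}\|$ the Frobenius norm. For $\mathbf{X}\in\mathbb{R}^{m\times n}$: $\|\mathbf{X}\|_1=\max_{1\le j\le n}\sum_{i=1}^m|x_{ij}|$ and $\|\mathbf{X}\|_{\max}=\max_{i,j}|x_{ij}|$ (maximum over all entries). For $\mathcal{A}\subseteq\mathbb{R}^N$, the Rademacher complexity is $R(\mathcal{A})=\frac1N\mathbb{E}_{\bm\sigma}\big[\sup_{\mathbf{a}\in\mathcal{A}}\sum_{i=1}^N\sigma_ia_i\big]$, where $\sigma_1,\dots,\sigma_N$ are i.i.d. uniform on $\{\pm1\}$. *)

From HB Require Import structures.
From mathcomp Require Import all_boot all_order all_algebra.
From mathcomp Require Import all_classical all_reals all_analysis.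
Set Implicit Arguments. Unset Strict Implicit. Unset Printing Implicit Defensive.
Import Order.TTheory GRing.Theory Num.Theory.
Local Open Scope classical_set_scope.
Local Open Scope ring_scope.

Section Defs.
Variable R : realType.

Definition frob_inner (p q : nat) (A B : 'M[R]_(p, q)) : R :=
  \sum_(i < p) \sum_(j < q) A i j * B i j.

Definition frob_norm (p q : nat) (A : 'M[R]_(p, q)) : R :=
  Num.sqrt (frob_inner A A).

Definition mx_norm1 (p q : nat) (X : 'M[R]_(p, q)) : R :=
  \big[Num.max/0]_(j < q) \sum_(i < p) `|X i j|.

Definition mx_normmax (p q : nat) (X : 'M[R]_(p, q)) : R :=
  \big[Num.max/0]_(i < p) \big[Num.max/0]_(j < q) `|X i j|.

Definition inner_H (p q : nat) (A B : 'M[R]_(p, q)) : 'M[R]_q := A^T *m B.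

Definition rsign (b : bool) : R := if b then 1 else -1.

(* Rademacher complexity of A ⊆ R^N: (1/N) E_sigma [sup_{a in A} sum_i sigma_i a_i],
   the expectation over the uniform distribution on {±1}^N written as
   an average over all 2^N sign vectors. *)
Definition rademacher (N : nat) (A : set ('I_N -> R)) : R :=
  N%:R^-1 * ((2 ^ N)%:R^-1 *
    \sum_(s : {ffun 'I_N -> bool})
       sup [set \sum_(i < N) rsign (s i) * a i | a in A]).

Definition Hmax_S (m n N : nat) (V : 'M[R]_n) (Xs : 'I_N -> 'M[R]_(m, n))
  : set ('I_N -> R) :=
  [set (fun i => frob_inner (inner_H W (Xs i)) ((frob_norm V)^-1 *: V))
     | W in [set W : 'M[R]_(m, n) | mx_normmax W <= 1]].

End Defs.

From HB Require Import structures.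
From mathcomp Require Import all_boot all_order all_algebra.
From mathcomp Require Import all_classical all_reals all_analysis.
From mathcomp Require Import ring lra.
Set Implicit Arguments. Unset Strict Implicit. Unset Printing Implicit Defensive.
Import Order.TTheory GRing.Theory Num.Theory.
Local Open Scope classical_set_scope.
Local Open Scope ring_scope.

(* Write U := V / ||V||.  Since <<W, X_i>_H, U> = <W, X_i U^T>, for a sign
   vector s the supremum over ||W||_max <= 1 is at most the entrywise l1 norm
   of sum_i s_i X_i U^T.  Averaging over s, every entry obeys Khintchine's
   inequality with constant 1 (Cauchy-Schwarz against the second moment
   sum_i c_i^2), and Cauchy-Schwarz over the mn entries gives
     R <= N^-1 sqrt (mn sum_i ||X_i U^T||^2) <= n max_i ||X_i||_1 sqrt (m / N),
   using ||X U^T|| <= ||X|| ||U||, ||U|| <= 1 and ||X||^2 <= n ||X||_1^2.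
   This is sharper than the claimed rate because m <= 2 (m ln 2 + ln n). *)

Section FiniteSums.
Variables (R : rcfType) (I : finType).
Implicit Types x y : I -> R.

Lemma cauchy_schwarz_sum x y :
  (\sum_i x i * y i) ^+ 2 <= (\sum_i x i ^+ 2) * (\sum_i y i ^+ 2).
Proof.
(* Lagrange's identity. *)
have : 0 <= \sum_i \sum_j (x i * y j - x j * y i) ^+ 2.
  by do 2 (apply: sumr_ge0 => ? _); exact: sqr_ge0.
have expand i j : (x i * y j - x j * y i) ^+ 2 =
    x i ^+ 2 * y j ^+ 2 + y i ^+ 2 * x j ^+ 2 - 2 * (x i * y i) * (x j * y j).
  by ring.
under eq_bigr => i _ do
  rewrite (eq_bigr _ (fun j _ => expand i j)) sumrB big_split -!mulr_sumr /=.
rewrite sumrB big_split -!mulr_suml -mulr_sumr /= expr2.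
lra.
Qed.

Lemma sum_le_sqrt_card_mul_sum_sqr x :
  \sum_i x i <= Num.sqrt (#|I|%:R * \sum_i x i ^+ 2).
Proof.
have := cauchy_schwarz_sum x (fun=> 1).
rewrite sumr_const expr1n -[_ *+ _]mulr_natr mul1r.
under eq_bigr do rewrite mulr1.
rewrite mulrC -ler_sqrt ?mulr_ge0 ?sumr_ge0 // => [|i _]; last exact: sqr_ge0.
by apply: le_trans; rewrite sqrtr_sqr ler_norm.
Qed.

End FiniteSums.

Section RademacherSums.
Variables (R : realType) (I : finType).
Local Notation signs := {ffun I -> bool}.

Definition flip_sign (i : I) (s : signs) : signs :=
  [ffun j => if j == i then ~~ s j else s j].

Lemma flip_signK i : involutive (flip_sign i).
Proof.
move=> s; apply/ffunP => j; rewrite !ffunE.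
by case: eqP => //= _; rewrite negbK.
Qed.

Lemma rsign_sqr b : rsign R b ^+ 2 = 1.
Proof. by case: b; rewrite /rsign ?sqrrN expr1n. Qed.

Lemma card_signs : #|signs| = (2 ^ #|I|)%N.
Proof. by rewrite card_ffun card_bool. Qed.

Lemma sum_rsignM_neq i j : i != j ->
  \sum_(s : signs) rsign R (s i) * rsign R (s j) = 0.
Proof.
move=> neq_ij; set S := (X in X = 0).
(* Flipping the i-th sign negates every term. *)
suff : S = - S by lra.
rewrite {1}/S (reindex_inj (can_inj (flip_signK i))) -sumrN.
apply: eq_bigr => s _; rewrite !ffunE eqxx eq_sym (negbTE neq_ij).
by case: (s i); rewrite /rsign /= ?mulN1r ?mul1r ?opprK.
Qed.

Lemma sum_rademacher_sqr (c : I -> R) :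
  \sum_(s : signs) (\sum_i rsign R (s i) * c i) ^+ 2
  = (2 ^ #|I|)%:R * \sum_i c i ^+ 2.
Proof.
under eq_bigr => s _ do rewrite expr2 big_distrlr /=.
rewrite exchange_big mulr_sumr; apply: eq_bigr => i _.
rewrite exchange_big (bigD1 i) //= [X in _ + X]big1 ?addr0 => [|j neq_ji].
  under eq_bigr => s _ do rewrite mulrACA -expr2 rsign_sqr mul1r.
  by rewrite sumr_const card_signs mulr_natl.
under eq_bigr => s _ do rewrite mulrACA.
by rewrite -mulr_suml sum_rsignM_neq 1?eq_sym // mul0r.
Qed.

Lemma sum_rademacher_abs_le (c : I -> R) :
  \sum_(s : signs) `|\sum_i rsign R (s i) * c i|
  <= (2 ^ #|I|)%:R * Num.sqrt (\sum_i c i ^+ 2).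
Proof.
apply: le_trans; first exact: sum_le_sqrt_card_mul_sum_sqr.
under eq_bigr do rewrite real_normK ?num_real //.
rewrite sum_rademacher_sqr card_signs mulrA -expr2 sqrtrM ?sqr_ge0 //.
by rewrite sqrtr_sqr ger0_norm.
Qed.

End RademacherSums.

Section FrobeniusInner.
Variable R : realType.

Definition mx_sum_abs (p q : nat) (A : 'M[R]_(p, q)) : R :=
  \sum_i \sum_j `|A i j|.

Lemma mx_normmax0 p q : mx_normmax (0 : 'M[R]_(p, q)) = 0.
Proof.
by do 2 (apply: big1_idem => [|? _]; first exact: maxxx); rewrite mxE normr0.
Qed.

Lemma le_mx_normmax p q (A : 'M[R]_(p, q)) i j : `|A i j| <= mx_normmax A.
Proof.
apply: le_trans (le_bigmax _ (fun i => \big[Num.max/0]_j `|A i j|) i).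
exact: (le_bigmax _ (fun j => `|A i j|) j).
Qed.

Lemma frob_inner_self p q (A : 'M[R]_(p, q)) :
  frob_inner A A = \sum_i \sum_j A i j ^+ 2.
Proof. by do 2 (apply: eq_bigr => ? _); rewrite expr2. Qed.

Lemma frob_inner_ge0 p q (A : 'M[R]_(p, q)) : 0 <= frob_inner A A.
Proof.
by rewrite frob_inner_self; do 2 (apply: sumr_ge0 => ? _); exact: sqr_ge0.
Qed.

Lemma frob_inner_inner_H p q (A B : 'M[R]_(p, q)) (U : 'M[R]_q) :
  frob_inner (inner_H A B) U = frob_inner A (B *m U^T).
Proof.
rewrite /frob_inner /inner_H.
under eq_bigr => k _ do under eq_bigr => l _ do rewrite !mxE big_distrl /=.
under eq_bigr => k _ do rewrite exchange_big /=.
rewrite exchange_big /=; apply: eq_bigr => r _; apply: eq_bigr => k _.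
rewrite !mxE big_distrr /=; apply: eq_bigr => l _.
by rewrite !mxE mulrA.
Qed.

Lemma frob_inner_sumr p q (J : finType) (A : 'M[R]_(p, q)) (c : J -> R)
    (B : J -> 'M[R]_(p, q)) :
  \sum_j c j * frob_inner A (B j) = frob_inner A (\sum_j c j *: B j).
Proof.
rewrite /frob_inner; under eq_bigr do rewrite mulr_sumr.
rewrite exchange_big /=; apply: eq_bigr => r _.
under eq_bigr do rewrite mulr_sumr.
rewrite exchange_big /=; apply: eq_bigr => k _.
rewrite summxE big_distrr /=; apply: eq_bigr => j _.
by rewrite mxE mulrCA.
Qed.

Lemma frob_inner_le_mx_sum_abs p q (A B : 'M[R]_(p, q)) :
  mx_normmax A <= 1 -> frob_inner A B <= mx_sum_abs B.
Proof.
move=> A_le1; apply: ler_sum => r _; apply: ler_sum => k _.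
apply: le_trans (ler_norm _) _; rewrite normrM ler_piMl //.
exact: le_trans (le_mx_normmax A r k) A_le1.
Qed.

Lemma frob_inner_mul_tr_le p q r (A : 'M[R]_(p, q)) (B : 'M[R]_(r, q)) :
  frob_inner (A *m B^T) (A *m B^T) <= frob_inner A A * frob_inner B B.
Proof.
rewrite !frob_inner_self big_distrlr /=.
apply: ler_sum => i _; apply: ler_sum => k _; rewrite mxE.
rewrite (eq_bigr (fun j => A i j * B k j)) => [|j _]; last by rewrite mxE.
exact: cauchy_schwarz_sum.
Qed.

(* Also for U = 0, where (frob_norm U)^-1 = 0. *)
Lemma frob_inner_normalized_le1 p q (U : 'M[R]_(p, q)) :
  frob_inner ((frob_norm U)^-1 *: U) ((frob_norm U)^-1 *: U) <= 1.
Proof.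
set c := (frob_norm U)^-1.
have -> : frob_inner (c *: U) (c *: U) = c ^+ 2 * frob_inner U U.
  rewrite /frob_inner mulr_sumr; apply: eq_bigr => i _.
  by rewrite mulr_sumr; apply: eq_bigr => j _; rewrite !mxE mulrACA.
rewrite /c /frob_norm exprVn sqr_sqrtr ?frob_inner_ge0 //.
have [->|nz] := eqVneq (frob_inner U U) 0; first by rewrite mulr0.
by rewrite mulVf.
Qed.

Lemma frob_inner_self_le_mx_norm1 p q (X : 'M[R]_(p, q)) :
  frob_inner X X <= q%:R * mx_norm1 X ^+ 2.
Proof.
rewrite /frob_inner exchange_big /= mulr_natl.
rewrite -[q in _ *+ q]card_ord -sumr_const.
apply: ler_sum => l _; set colsum := \sum_r `|X r l|.
have colsum_ge0 : 0 <= colsum by apply: sumr_ge0.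
have colsum_le : colsum <= mx_norm1 X.
  exact: (le_bigmax _ (fun j => \sum_r `|X r j|) l).
apply: le_trans (_ : colsum ^+ 2 <= _); last by rewrite !expr2 ler_pM.
rewrite expr2 big_distrl /=; apply: ler_sum => r _.
apply: le_trans (ler_norm _) _; rewrite normrM ler_wpM2l //.
by rewrite /colsum (bigD1 r) //= lerDl sumr_ge0.
Qed.

Lemma frob_inner_mul_tr_le_mx_norm1 p q r
    (X : 'M[R]_(p, q)) (U : 'M[R]_(r, q)) :
  frob_inner U U <= 1 ->
  frob_inner (X *m U^T) (X *m U^T) <= q%:R * mx_norm1 X ^+ 2.
Proof.
move=> U_le1; apply: le_trans (frob_inner_mul_tr_le _ _) _.
apply: le_trans (frob_inner_self_le_mx_norm1 X).
by rewrite -[X in _ <= X]mulr1 ler_wpM2l ?frob_inner_ge0.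
Qed.

Lemma sum_rademacher_mx_sum_abs_le p q (J : finType) (Y : J -> 'M[R]_(p, q)) :
  \sum_(s : {ffun J -> bool}) mx_sum_abs (\sum_j rsign R (s j) *: Y j)
  <= (2 ^ #|J|)%:R * Num.sqrt ((p * q)%:R * \sum_j frob_inner (Y j) (Y j)).
Proof.
rewrite /mx_sum_abs exchange_big /=; under eq_bigr do rewrite exchange_big /=.
apply: le_trans (_ : \sum_r \sum_k (2 ^ #|J|)%:R *
    Num.sqrt (\sum_j Y j r k ^+ 2) <= _).
  apply: ler_sum => r _; apply: ler_sum => k _.
  under eq_bigr do rewrite summxE.
  under eq_bigr do under eq_bigr do rewrite mxE.
  exact: sum_rademacher_abs_le.
rewrite pair_bigA /= -mulr_sumr ler_wpM2l //.
apply: le_trans; first exact: sum_le_sqrt_card_mul_sum_sqr.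
suff -> : \sum_(rk : 'I_p * 'I_q) Num.sqrt (\sum_j Y j rk.1 rk.2 ^+ 2) ^+ 2
    = \sum_j frob_inner (Y j) (Y j) by rewrite card_prod !card_ord.
rewrite (eq_bigr (fun rk => \sum_j Y j rk.1 rk.2 ^+ 2)) => [|rk _]; last first.
  by rewrite sqr_sqrtr // sumr_ge0 // => j _; exact: sqr_ge0.
rewrite exchange_big /=; apply: eq_bigr => j _.
by rewrite frob_inner_self pair_bigA.
Qed.

End FrobeniusInner.

Section HmaxRademacher.
Variable R : realType.

Lemma sup_Hmax_S_le m n N (V : 'M[R]_n) (Xs : 'I_N -> 'M[R]_(m, n))
    (s : {ffun 'I_N -> bool}) :
  sup [set \sum_i rsign R (s i) * a i | a in Hmax_S V Xs]
  <= mx_sum_abs (\sum_i rsign R (s i) *: (Xs i *m ((frob_norm V)^-1 *: V)^T)).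
Proof.
set U := (frob_norm V)^-1 *: V; apply: ge_sup.
  exists (\sum_i rsign R (s i) * frob_inner (inner_H 0 (Xs i)) U).
  by exists (fun i => frob_inner (inner_H 0 (Xs i)) U) => //; exists 0;
    rewrite /= ?mx_normmax0 ?ler01.
move=> _ [_ [W W_le1 <-] <-].
rewrite (eq_bigr _ (fun i _ => congr1 _ (frob_inner_inner_H W (Xs i) U))).
by rewrite frob_inner_sumr frob_inner_le_mx_sum_abs.
Qed.

Lemma ln2_ge_half : 2^-1 <= ln (2 : R).
Proof.
have half : 1 - 2^-1 = 2^-1 :> R by field.
have := @le_ln1Dx R (- 2^-1); rewrite half lnV ?posrE //; lra.
Qed.

Lemma khintchine_rate_le_massart_rate m n N (M : R) :
  (0 < n)%N -> (0 < N)%N -> 0 <= M ->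
  N%:R^-1 * Num.sqrt ((m * n)%:R * (N%:R * (n%:R * M ^+ 2)))
  <= n%:R * M * Num.sqrt (2 * (m%:R * ln 2 + ln n%:R) / N%:R).
Proof.
move=> n_gt0 N_gt0 M_ge0.
have N_neq0 : N%:R != 0 :> R by rewrite pnatr_eq0 -lt0n.
have nM_ge0 : 0 <= n%:R * M by rewrite mulr_ge0.
have -> : (m * n)%:R * (N%:R * (n%:R * M ^+ 2))
    = (n%:R * M * N%:R) ^+ 2 * (m%:R / N%:R) :> R by rewrite natrM; field.
rewrite sqrtrM ?sqr_ge0 // sqrtr_sqr ger0_norm ?mulr_ge0 //.
have -> : forall x, N%:R^-1 * (n%:R * M * N%:R * x) = n%:R * M * x.
  by move=> x; field.
have m_le : m%:R <= 2 * (m%:R * ln 2 + ln n%:R) :> R.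
  have := ln2_ge_half; have : 0 <= ln n%:R :> R by rewrite ln_ge0 // ler1n.
  have : 0 <= m%:R :> R by []; nra.
rewrite ler_wpM2l // ler_sqrt ?ler_wpM2r ?invr_ge0 //.
by rewrite divr_ge0 // (le_trans _ m_le).
Qed.

End HmaxRademacher.

Theorem lemma5 (R : realType) (m n N : nat) (hm : (0 < m)%N) (hn : (0 < n)%N)
  (hN : (0 < N)%N)
  (V : 'M[R]_n) (hV0 : V != 0) (hVsym : V^T = V)
  (hV : forall X : 'M[R]_(m, n),
      0 <= frob_inner (inner_H X X) ((frob_norm V)^-1 *: V))
  (Xs : 'I_N -> 'M[R]_(m, n)) :
  rademacher (Hmax_S V Xs) <=
    n%:R * (\big[Num.max/0]_(i < N) mx_norm1 (Xs i)) *
    Num.sqrt (2 * (m%:R * ln 2 + ln n%:R) / N%:R).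
Proof.
set U := (frob_norm V)^-1 *: V.
set M := \big[Num.max/0]_(i < N) mx_norm1 (Xs i).
pose Y i := Xs i *m U^T.
have Y_le i : frob_inner (Y i) (Y i) <= n%:R * M ^+ 2.
  apply: le_trans
    (frob_inner_mul_tr_le_mx_norm1 (Xs i) (frob_inner_normalized_le1 V)) _.
  have norm1_le : mx_norm1 (Xs i) <= M.
    exact: (le_bigmax _ (fun i => mx_norm1 (Xs i))).
  by rewrite ler_wpM2l // !expr2 ler_pM // /mx_norm1 bigmax_ge_id.
have M_ge0 : 0 <= M by exact: bigmax_ge_id.
apply: le_trans (khintchine_rate_le_massart_rate m hn hN M_ge0).
rewrite /rademacher ler_wpM2l ?invr_ge0 //.
apply: le_trans (_ : (2 ^ N)%:R^-1 * ((2 ^ #|'I_N|)%:R *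
    Num.sqrt ((m * n)%:R * \sum_i frob_inner (Y i) (Y i))) <= _).
  rewrite ler_wpM2l ?invr_ge0 //.
  apply: le_trans (sum_rademacher_mx_sum_abs_le Y).
  by apply: ler_sum => s _; exact: sup_Hmax_S_le.
rewrite card_ord mulKf ?pnatr_eq0 ?expn_eq0 // ler_sqrt ?mulr_ge0 //.
rewrite ler_wpM2l // mulr_natl -[N in _ *+ N]card_ord -sumr_const.
exact: ler_sum.
Qed.
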